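(* Let $q\ge3$, $G\in\mathbb G^q$, $S=\Psi(G)$ with core $C$. Let $w$ be a white vertex of $S$ that belongs to $C$ and is not a chain-vertex of $C$. If at least one core-chain of $C$ incident to $w$ contains at least one internal white vertex, then $w$ is admissible.
   Context: Fix an integer $q\ge 2$. A $(q+1)$-edge-colored graph (colored graph) is a finite connected graph, multiple edges allowed and no loops, whose edges carry colors in $\{0,1,\dots,q\}$ such that every vertex is incident to exactly one edge of each color. It is rooted if one color-0 edge is distinguished and oriented; it is bipartite if its vertices can be colored black and white so that every edge joins a black and a white vertex, with the convention that the origin of the root edge is black. $\mathbb G^q$ denotes the set of rooted bipartite colored graphs. Constellations: given $G\in\mathbb G^q$, its constellation $S=\Psi(G)$ is obtained as follows: orient every edge from its black to its white endpoint; contract every color-0 edge into a single vertex, called a white vertex of $S$ (the one coming from the root edge is the root vertex). For each $i\in\{1,\dots,q\}$ the color-$i$ edges now form directed cycles; for each such cycle, passing through white vertices $w_1,\dots,w_p$ in this cyclic order, add a new vertex of color $i$ joined by one color-$i$ edge to each $w_k$, equip the new vertex with the cyclic order $(w_1,\dots,w_p)$ of its incident edges, and delete the original color-$i$ edges of the cycle. Core: the core $C$ of $S$ is obtained by repeatedly deleting a vertex of degree $1$ other than the root vertex, together with its incident edge, until every non-root vertex has degree at least 2; a vertex of $S$ belongs to $C$ if it is not deleted. A chain-vertex of $C$ is a non-root vertex of degree $2$ in $C$; a core-chain is a path of $C$ (possibly closed) whose internal vertices are chain-vertices and whose extremities are not chain-vertices. A white vertex $w$ of $S=\Psi(G)$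 is admissible if the two endpoints of the color-0 edge of $G$ contracted to $w$ are joined in $G$ by a path containing no color-0 edge. *)

From mathcomp Require Import all_boot.
From Stdlib Require Import Relations.
Set Implicit Arguments. Unset Strict Implicit. Unset Printing Implicit Defensive.

(* A (q+1)-edge-colored graph on vertex type V is given by, for each color
   i : 'I_q.+1, the map sigma i sending a vertex to the other endpoint of
   its unique incident color-i edge. Color 0 is ord0; color j+1 (j : 'I_q)
   is lift ord0 j. *)
Definition col (q : nat) (j : 'I_q) : 'I_q.+1 := lift ord0 j.

Definition Gadj (q : nat) (V : finType) (sigma : 'I_q.+1 -> V -> V) : rel V :=
  fun a c => [exists i : 'I_q.+1, sigma i a == c].

Definition colored_graph (q : nat) (V : finType) (sigma : 'I_q.+1 -> V -> V) : Prop :=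
  [/\ (forall i v, sigma i (sigma i v) = v),
      (forall i v, sigma i v != v) &
      (forall u v, connect (Gadj sigma) u v)].

(* root edge = color-0 edge {r, sigma 0 r} oriented from r; bipartition
   black/white with r black *)
Definition rooted_bipartite (q : nat) (V : finType) (sigma : 'I_q.+1 -> V -> V)
  (r : V) (black : V -> bool) : Prop :=
  black r /\ (forall i v, black (sigma i v) = ~~ black v).

(* White vertices of S = color-0 edges of G,
   represented by their black endpoint: inl b.  A color-(j+1) vertex of S is
   a directed cycle of color-(j+1) edges after contracting color-0 edges,
   i.e. an orbit of phi j := sigma 0 \o sigma (j+1) on black vertices,
   represented by inr (j, c) with c the canonical root of the orbit. *)
Notation svert q V := (V + ('I_q * V))%type.

Definition phi (q : nat) (V : finType) (sigma : 'I_q.+1 -> V -> V) (j : 'I_q)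
  (v : V) : V := sigma ord0 (sigma (col j) v).

Definition svalid (q : nat) (V : finType) (sigma : 'I_q.+1 -> V -> V)
  (black : V -> bool) (x : svert q V) : bool :=
  match x with
  | inl b => black b
  | inr (j, c) => black c && (froot (phi sigma j) c == c)
  end.

Definition adjS (q : nat) (V : finType) (sigma : 'I_q.+1 -> V -> V)
  (black : V -> bool) : rel (svert q V) :=
  fun x y => [&& svalid sigma black x, svalid sigma black y &
    match x, y with
    | inl b, inr (j, c) => froot (phi sigma j) b == c
    | inr (j, c), inl b => froot (phi sigma j) b == c
    | _, _ => false
    end].

Definition is_white (q : nat) (V : finType) (x : svert q V) : bool :=
  if x is inl _ then true else false.

(* degree of x in the subgraph of S induced by X (S is simple) *)
Definition deg (q : nat) (V : finType) (sigma : 'I_q.+1 -> V -> V)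
  (black : V -> bool) (X : {set svert q V}) (x : svert q V) : nat :=
  #|[set y in X | adjS sigma black x y]|.

Definition prune_step (q : nat) (V : finType) (sigma : 'I_q.+1 -> V -> V)
  (black : V -> bool) (rootS : svert q V) (X Y : {set svert q V}) : Prop :=
  exists2 x, x \in X &
    [/\ x != rootS, deg sigma black X x = 1 & Y = X :\ x].

Definition is_core (q : nat) (V : finType) (sigma : 'I_q.+1 -> V -> V)
  (black : V -> bool) (r : V) (C : {set svert q V}) : Prop :=
  clos_refl_trans _ (prune_step sigma black (inl r))
    [set x | svalid sigma black x] C /\
  (forall x, x \in C -> x != inl r -> 2 <= deg sigma black C x).

Definition chain_vertex (q : nat) (V : finType) (sigma : 'I_q.+1 -> V -> V)
  (black : V -> bool) (r : V) (C : {set svert q V}) (x : svert q V) : bool :=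
  [&& x \in C, x != inl r & deg sigma black C x == 2].

(* Path: the
   vertices x0..x(k-1) are distinct; a closed path (xk = x0) has at least
   3 edges, so that no edge is used twice in the simple graph S. *)
Definition has_white_core_chain_at (q : nat) (V : finType)
  (sigma : 'I_q.+1 -> V -> V) (black : V -> bool) (r : V)
  (C : {set svert q V}) (w : svert q V) : Prop :=
  exists xs : seq (svert q V),
    let internal := take (size xs).-1 xs in
    let e := last w xs in
    [/\ path (fun a b => [&& a \in C, b \in C & adjS sigma black a b]) w xs,
        2 <= size xs,
        all (chain_vertex sigma black r C) internal,
        ~~ chain_vertex sigma black r C e &
        [/\ uniq (w :: internal),
            (e == w) -> 3 <= size xs &
            has (@is_white q V) internal]].

Definition admissible (q : nat) (V : finType) (sigma : 'I_q.+1 -> V -> V)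
  (b : V) : Prop :=
  connect (fun u v => [exists j : 'I_q, sigma (col j) u == v]) b (sigma ord0 b).

(* Say that a set X of vertices of S forces a black vertex y if the white
   vertex of y, or one of its q coloured neighbours, lies outside X.  Along
   the pruning that produces the core, every forced vertex stays admissible:
   a white vertex of degree 1 < q is deleted only after one of its coloured
   neighbours, and when a coloured vertex of degree 1 is deleted, all white
   vertices of its cycle but one are already admissible, so walking once
   around the cycle, whose steps avoid colour 0, makes the last one
   admissible too.  In the core, the white neighbour w' of w along a white
   core-chain has degree 2 < q, so it is forced; the coloured vertex between
   w and w' has no other white neighbour in the core, and the cycle argument
   applies once more to w. *)
From Stdlib Require Import Relations.
From mathcomp Require Import all_boot.

Set Implicit Arguments. Unset Strict Implicit. Unset Printing Implicit Defensive.

Lemma card2_mem (T : finType) (A : {set T}) a b x :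
  #|A| = 2 -> a \in A -> b \in A -> a != b -> x \in A -> (x == a) || (x == b).
Proof.
move=> cardA aA bA neab xA; apply/negPn/negP; rewrite negb_or => /andP [nexa nexb].
have : 3 <= #|A|.
  rewrite (cardsD1 a) (cardsD1 b) (cardsD1 x) aA !in_setD1 eq_sym neab bA.
  by rewrite nexa nexb xA.
by rewrite cardA.
Qed.

Section Constellation.

Variables (q : nat) (V : finType) (sigma : 'I_q.+1 -> V -> V) (black : V -> bool).
Hypothesis sigmaK : forall i v, sigma i (sigma i v) = v.
Hypothesis black_sigma : forall i v, black (sigma i v) = ~~ black v.

Definition nonzero_adj : rel V := fun u v => [exists j : 'I_q, sigma (col j) u == v].

Lemma nonzero_adj_sym : connect_sym nonzero_adj.
Proof.
apply: sym_connect_sym => u v.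
by apply/existsP/existsP => -[j /eqP <-]; exists j; rewrite sigmaK.
Qed.

Lemma phi_inj j : injective (phi sigma j).
Proof.
move=> x y /(congr1 (sigma ord0)); rewrite /phi !sigmaK.
by move=> /(congr1 (sigma (col j))); rewrite !sigmaK.
Qed.

Lemma phi_fconnect_sym j : connect_sym (frel (phi sigma j)).
Proof. exact/fconnect_sym/phi_inj. Qed.

Lemma black_iter_phi j n v : black (iter n (phi sigma j) v) = black v.
Proof. by elim: n => //= n IH; rewrite /phi !black_sigma negbK IH. Qed.

Lemma froot_iter_phi j n v :
  froot (phi sigma j) (iter n (phi sigma j) v) = froot (phi sigma j) v.
Proof. by apply/esym/(rootP (phi_fconnect_sym j))/fconnect_iter. Qed.

Lemma black_froot_phi j v : black (froot (phi sigma j) v) = black v.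
Proof.
by have /iter_findex <- := connect_root (frel (phi sigma j)) v; apply: black_iter_phi.
Qed.

Lemma black_froot_eq j u v :
  froot (phi sigma j) u = froot (phi sigma j) v -> black u = black v.
Proof. by move=> ruv; rewrite -(black_froot_phi j u) ruv black_froot_phi. Qed.

(* Going once around the cycle of phi j through b: each step from
   sigma 0 (phi j v) to v is a single colour-(j+1) edge, and admissibility
   of the next vertex bridges v to sigma 0 v. *)
Lemma admissible_of_cycle j b :
  (forall y, froot (phi sigma j) y = froot (phi sigma j) b -> y != b ->
     admissible sigma y) ->
  admissible sigma b.
Proof.
move=> adm_cycle; rewrite /admissible -/nonzero_adj.
have step v : connect nonzero_adj (sigma ord0 (phi sigma j v)) v.
  by rewrite /phi sigmaK; apply: connect1; apply/existsP; exists j; rewrite sigmaK.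
have around n : connect nonzero_adj (sigma ord0 (iter n.+1 (phi sigma j) b)) b.
  elim: n => [|n IH]; first exact: step.
  rewrite iterS; apply: connect_trans (step _) _.
  have [->|ne] := eqVneq (iter n.+1 (phi sigma j) b) b; first exact: connect0.
  by apply: connect_trans (adm_cycle _ (froot_iter_phi _ _ _) ne) IH.
have := iter_order (@phi_inj j) b; have := order_gt0 (phi sigma j) b.
case: (order _ _) => [|n] // _ cycle_b.
by rewrite nonzero_adj_sym; have := around n; rewrite cycle_b.
Qed.

Lemma adjS_colour_white j c y :
  svalid sigma black (inr (j, c)) ->
  adjS sigma black (inr (j, c)) (inl y) = black y && (froot (phi sigma j) y == c).
Proof. by rewrite /adjS => ->. Qed.

Lemma adjS_white_colour y j : black y ->
  adjS sigma black (inl y) (inr (j, froot (phi sigma j) y)).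
Proof.
move=> by_; rewrite /adjS /= by_ black_froot_phi by_.
by rewrite (root_root (phi_fconnect_sym j)) eqxx.
Qed.

Lemma svalid_colour_froot j y : black y ->
  svalid sigma black (inr (j, froot (phi sigma j) y)).
Proof.
by move=> by_; rewrite /= black_froot_phi by_ (root_root (phi_fconnect_sym j)) eqxx.
Qed.

Lemma in_colour_neighbours (X : {set svert q V}) j v z : black v ->
  (inl z \in [set x in X | adjS sigma black (inr (j, froot (phi sigma j) v)) x])
  = [&& inl z \in X, black z & froot (phi sigma j) z == froot (phi sigma j) v].
Proof. by move=> bv; rewrite inE adjS_colour_white ?svalid_colour_froot. Qed.

Lemma white_deg_lt X y : black y -> deg sigma black X (inl y) < q ->
  exists j, inr (j, froot (phi sigma j) y) \notin X.
Proof.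
move=> by_ degy; apply/existsP; rewrite -negb_forall; apply/negP => /forallP allX.
suff : #|[set (inr (j, froot (phi sigma j) y) : svert q V) | j : 'I_q]|
         <= deg sigma black X (inl y).
  rewrite card_imset ?card_ord => [|j1 j2 [] //].
  by rewrite leqNgt degy.
apply/subset_leq_card/subsetP => z /imsetP [j _ ->].
by rewrite inE allX adjS_white_colour.
Qed.

Definition pruned_admissible (X : {set svert q V}) : Prop :=
  forall y, black y ->
    (inl y \notin X \/ exists j, inr (j, froot (phi sigma j) y) \notin X) ->
    admissible sigma y.

Section PrunedAdmissible.

Variable X : {set svert q V}.
Hypothesis admX : pruned_admissible X.

Lemma admissible_of_colour_neighbours j b : black b ->
  (forall y, froot (phi sigma j) y = froot (phi sigma j) b -> inl y \in X ->
     y != b -> admissible sigma y) ->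
  admissible sigma b.
Proof.
move=> bb adm_in; apply: (admissible_of_cycle (j := j)) => y ryb neyb.
have [yX|yNX] := boolP (inl y \in X); first exact: adm_in.
by apply: admX; [rewrite (black_froot_eq ryb) | left].
Qed.

Lemma admissible_of_deg1_colour j y : black y ->
  deg sigma black X (inr (j, froot (phi sigma j) y)) = 1 -> admissible sigma y.
Proof.
move=> by_ /eqP /cards1P [z0 nbrs].
have : z0 \in [set x in X | adjS sigma black (inr (j, froot (phi sigma j) y)) x].
  by rewrite nbrs set11.
case: z0 nbrs => [u|z0] nbrs; last by case: z0 nbrs => ? ? _; rewrite inE /adjS !andbF.
rewrite in_colour_neighbours // => /and3P [_ bu /eqP ruy].
have nbr_u z : froot (phi sigma j) z = froot (phi sigma j) y -> inl z \in X -> z = u.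
  move=> rzy zX; move: (black_froot_eq rzy); rewrite by_ => bz.
  have : inl z \in [set x in X | adjS sigma black (inr (j, froot (phi sigma j) y)) x].
    by rewrite in_colour_neighbours // zX bz rzy eqxx.
  by rewrite nbrs => /set1P [].
have adm_u : admissible sigma u.
  apply: (admissible_of_colour_neighbours (j := j)) bu _ => z rzu zX.
  by rewrite (nbr_u z _ zX) ?eqxx // rzu ruy.
apply: (admissible_of_colour_neighbours (j := j)) by_ _ => z rzy zX _.
by rewrite (nbr_u z rzy zX).
Qed.

End PrunedAdmissible.

Lemma pruned_admissible_prune r X Y : 2 <= q ->
  prune_step sigma black (inl r) X Y -> pruned_admissible X -> pruned_admissible Y.
Proof.
move=> q_ge2 [x xX [_ degx ->]] admX y by_ outY.
have [outX|[xy|[j xj]]] :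
    (inl y \notin X \/ exists j, inr (j, froot (phi sigma j) y) \notin X) \/
    (x = inl y \/ exists j, x = inr (j, froot (phi sigma j) y)).
- case: outY => [|[j]]; rewrite in_setD1 negb_and negbK => /orP [/eqP|]; auto.
  + by right; right; exists j.
  + by left; right; exists j.
- exact: admX.
- by apply: admX => //; right; apply: white_deg_lt; rewrite // -xy degx.
- by rewrite xj in degx; apply: admissible_of_deg1_colour degx.
Qed.

Lemma pruned_admissible_core r C : 2 <= q ->
  is_core sigma black r C -> pruned_admissible C.
Proof.
move=> q_ge2 [pruneC _].
suff init : pruned_admissible [set x | svalid sigma black x].
  elim: pruneC init => [X Y /(pruned_admissible_prune q_ge2) //|//|].
  by move=> X Y Z _ IH1 _ IH2 /IH1 /IH2.
by move=> y by_ [|[j]]; rewrite inE ?svalid_colour_froot //= by_.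
Qed.

Lemma white_core_chain_start r C b :
  has_white_core_chain_at sigma black r C (inl b) ->
  exists j b1, [/\ chain_vertex sigma black r C (inr (j, froot (phi sigma j) b)),
    chain_vertex sigma black r C (inl b1), black b1, b1 != b &
    froot (phi sigma j) b1 = froot (phi sigma j) b].
Proof.
case=> xs [chain size_xs internal _ [uniq_xs _ has_white]].
case: xs chain size_xs internal uniq_xs has_white => [|c1 [|x1 [|x2 xs]]] //=.
  case: c1 => [v|p] /andP [/and3P [_ _ adj] _] _ _ _ //.
  by move: adj; rewrite /adjS /= !andbF.
case: c1 x1 => [v|[j c]] [b1|p];
  move=> /and4P [/and3P [_ _ adj1] /and3P [_ _ adj2] _ _] _;
  move: adj1 adj2; rewrite /adjS /= ?andbF //.
move=> /and3P [_ _ /eqP rb] /and3P [_ bb1 /eqP rb1] /and3P [cv_c cv_b1 _].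
rewrite !inE => /and4P [nb _ _ _] _.
exists j, b1; rewrite rb rb1; split=> //.
by apply: contraNneq nb => ->; rewrite eqxx orbT.
Qed.

Lemma colour_deg2_other_neighbour X j b b1 y : black b ->
  deg sigma black X (inr (j, froot (phi sigma j) b)) = 2 ->
  inl b \in X -> inl b1 \in X -> black b1 -> b1 != b ->
  froot (phi sigma j) b1 = froot (phi sigma j) b ->
  inl y \in X -> froot (phi sigma j) y = froot (phi sigma j) b -> y != b ->
  y = b1.
Proof.
move=> bb deg2 bX b1X bb1 neb1 rb1 yX ryb neyb.
have := @card2_mem _ _ (inl b) (inl b1) (inl y) deg2.
rewrite !in_colour_neighbours // bX b1X yX (black_froot_eq ryb) bb bb1 ryb rb1 eqxx.
rewrite !(inj_eq (@inl_inj _ _)) (negbTE neyb) /= => /(_ isT isT _ isT) /eqP-> //.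
by rewrite eq_sym.
Qed.

End Constellation.

Theorem mainTheorem9 (q : nat) (V : finType) (sigma : 'I_q.+1 -> V -> V)
  (r : V) (black : V -> bool) (C : {set svert q V}) (b : V) :
  3 <= q ->
  colored_graph sigma ->
  rooted_bipartite sigma r black ->
  is_core sigma black r C ->
  black b ->
  inl b \in C ->
  ~~ chain_vertex sigma black r C (inl b) ->
  has_white_core_chain_at sigma black r C (inl b) ->
  admissible sigma b.
Proof.
move=> q_ge3 [sigmaK _ _] [_ black_sigma] coreC bb bC _.
case/white_core_chain_start=> j [b1 [cv_c cv_b1 bb1 neb1 rb1]].
have admC := pruned_admissible_core sigmaK black_sigma (ltnW q_ge3) coreC.
have adm_b1 : admissible sigma b1.
  apply: admC => //; right; apply: white_deg_lt => //.
  by case/and3P: cv_b1 => _ _ /eqP ->.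
case/and3P: cv_c cv_b1 => _ _ /eqP deg2 /and3P [b1C _ _].
have only_b1 :=
  colour_deg2_other_neighbour sigmaK black_sigma bb deg2 bC b1C bb1 neb1 rb1.
apply: (admissible_of_colour_neighbours sigmaK black_sigma admC (j := j) bb).
by move=> y ryb yC neyb; rewrite (only_b1 y yC ryb neyb).
Qed.
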